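(* Let $0<p_0<1$, $\epsilon>0$, $\omega\ge0$, $\gamma_0\ge\gamma\ge0$. Let $\omega(t),\epsilon_x(t),\epsilon_y(t),\delta\gamma_t$ be real-valued functions of time with $|\omega(t)|\le\omega$, $\sqrt{\epsilon_x^2(t)+\epsilon_y^2(t)}\le\epsilon$, $|\delta\gamma_t|\le\gamma$, and set $H(t)=[1+\omega(t)]I_z+\epsilon_x(t)I_x+\epsilon_y(t)I_y$, $\gamma_t=\gamma_0+\delta\gamma_t$. Let the qubit density matrix $\rho_t$ evolve according to $$\dot\rho_t=-i[H(t),\rho_t]+\gamma_t\Big(\sigma_-\rho_t\sigma_+-\tfrac12\sigma_+\sigma_-\rho_t-\tfrac12\rho_t\sigma_+\sigma_-\Big)$$ with $\rho_0=|0\rangle\langle0|$. Let $$T_a=\frac{2p_0}{\sqrt{4\epsilon^2+(\gamma_0+\gamma)^2}+(\gamma_0+\gamma)}.$$ Then for every $t\in[0,T_a]$, $\rho_t\in\mathcal{D}_a=\{\rho:\langle0|\rho|0\rangle\ge1-p_0\}$; equivalently, if a projective measurement of $\sigma_z$ is made at time $t$, the probability of failure $p=\langle1|\rho_t|1\rangle$ is at most $p_0$.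
   Context: $\sigma_x,\sigma_y,\sigma_z$ are the Pauli matrices $\begin{pmatrix}0&1\\1&0\end{pmatrix},\begin{pmatrix}0&-i\\i&0\end{pmatrix},\begin{pmatrix}1&0\\0&-1\end{pmatrix}$, $I_j=\frac12\sigma_j$, $\sigma_-=\frac12(\sigma_x-i\sigma_y)$, $\sigma_+=\frac12(\sigma_x+i\sigma_y)$, $[A,B]=AB-BA$. $|0\rangle=(1,0)^T$, $|1\rangle=(0,1)^T$ are the eigenvectors of $\sigma_z$ with eigenvalues $1,-1$. Units with $\hbar=1$. The probability of failure is the probability that a $\sigma_z$ measurement yields $|1\rangle$. *)

From Stdlib Require Import Reals.
From Coquelicot Require Import Coquelicot.
Open Scope R_scope.

(* 2x2 complex matrices, indexed by 0,1 (basis |0>, |1>);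
   only the indices 0 and 1 are ever used. *)
Definition mat := nat -> nat -> C.

Definition madd (A B : mat) : mat := fun i j => Cplus (A i j) (B i j).
Definition msub (A B : mat) : mat := fun i j => Cminus (A i j) (B i j).
Definition mscale (c : C) (A : mat) : mat := fun i j => Cmult c (A i j).
Definition mmul (A B : mat) : mat :=
  fun i j => Cplus (Cmult (A i 0%nat) (B 0%nat j)) (Cmult (A i 1%nat) (B 1%nat j)).
Definition comm (A B : mat) : mat := msub (mmul A B) (mmul B A).

Definition sx : mat := fun i j =>
  match i, j with 0, 1 | 1, 0 => RtoC 1 | _, _ => RtoC 0 end%nat.
Definition sy : mat := fun i j =>
  match i, j with 0, 1 => Copp Ci | 1, 0 => Ci | _, _ => RtoC 0 end%nat.
Definition sz : mat := fun i j =>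
  match i, j with 0, 0 => RtoC 1 | 1, 1 => RtoC (-1) | _, _ => RtoC 0 end%nat.

Definition Ix : mat := mscale (RtoC (1/2)) sx.
Definition Iy : mat := mscale (RtoC (1/2)) sy.
Definition Iz : mat := mscale (RtoC (1/2)) sz.
Definition sminus : mat := mscale (RtoC (1/2)) (msub sx (mscale Ci sy)).
Definition splus  : mat := mscale (RtoC (1/2)) (madd sx (mscale Ci sy)).

Definition ket0bra0 : mat := fun i j =>
  match i, j with 0, 0 => RtoC 1 | _, _ => RtoC 0 end%nat.

Definition Ham (om ex ey : R -> R) (t : R) : mat :=
  madd (mscale (RtoC (1 + om t)) Iz)
       (madd (mscale (RtoC (ex t)) Ix) (mscale (RtoC (ey t)) Iy)).

Definition dissip (rho : mat) : mat :=
  msub (msub (mmul (mmul sminus rho) splus)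
             (mscale (RtoC (1/2)) (mmul (mmul splus sminus) rho)))
       (mscale (RtoC (1/2)) (mmul rho (mmul splus sminus))).

Definition lindblad_rhs (om ex ey dgam : R -> R) (gamma0 t : R) (rho : mat) : mat :=
  madd (mscale (Copp Ci) (comm (Ham om ex ey t) rho))
       (mscale (RtoC (gamma0 + dgam t)) (dissip rho)).

Definition solves_master (om ex ey dgam : R -> R) (gamma0 : R) (rho : R -> mat) : Prop :=
  rho 0 = ket0bra0 /\
  (forall i j : nat, (i < 2)%nat -> (j < 2)%nat ->
     filterlim (fun t => Re (rho t i j)) (at_right 0) (locally (Re (rho 0 i j))) /\
     filterlim (fun t => Im (rho t i j)) (at_right 0) (locally (Im (rho 0 i j)))) /\
  (forall t : R, 0 < t -> forall i j : nat, (i < 2)%nat -> (j < 2)%nat ->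
     is_derive (fun s => Re (rho s i j)) t (Re (lindblad_rhs om ex ey dgam gamma0 t (rho t) i j)) /\
     is_derive (fun s => Im (rho s i j)) t (Im (lindblad_rhs om ex ey dgam gamma0 t (rho t) i j))).

Definition Ta (p0 eps gamma0 gamma : R) : R :=
  2 * p0 / (sqrt (4 * eps ^ 2 + (gamma0 + gamma) ^ 2) + (gamma0 + gamma)).

(* The populations and the Hermitian part of the coherence obey closed Bloch
   equations.  Along them the trace pop0 + pop1 stays 1 and the determinant
   D = pop0 pop1 - |coh|^2 stays nonnegative, because D' = gamma (pop0^2 - D)
   with gamma >= 0.  Hence |coh|^2 <= pop0 (1 - pop0), and Cauchy-Schwarz bounds
   the excitation rate pop1' = ex Im coh + ey Re coh + gamma pop0 by
   (G + sqrt (eps^2 + G^2)) / 2 with G = gamma0 + gamma.  So pop1 grows at most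
   linearly from 0 and stays below p0 up to time T_a. *)

From Stdlib Require Import Reals Lra Lia.
From Coquelicot Require Import Coquelicot.
Open Scope R_scope.

Definition right_cont (f : R -> R) (a : R) : Prop :=
  filterlim f (at_right a) (locally (f a)).

Lemma right_cont_of_continuous (f : R -> R) (a : R) :
  continuous f a -> right_cont f a.
Proof. apply filterlim_filter_le_1, filter_le_within. Qed.

Lemma continuous_of_is_derive (f : R -> R) (a l : R) :
  is_derive f a l -> continuous f a.
Proof.
  intros Hd. apply (ex_derive_continuous (K := R_AbsRing) (V := R_NormedModule)).
  now exists l.
Qed.

Lemma right_cont_const (c a : R) : right_cont (fun _ => c) a.
Proof. apply filterlim_const. Qed.

Lemma right_cont_plus (f g : R -> R) (a : R) :
  right_cont f a -> right_cont g a -> right_cont (fun t => f t + g t) a.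
Proof.
  intros Hf Hg.
  exact (filterlim_comp_2 f g Rplus Hf Hg (filterlim_plus (V := R_NormedModule) (f a) (g a))).
Qed.

Lemma right_cont_mult (f g : R -> R) (a : R) :
  right_cont f a -> right_cont g a -> right_cont (fun t => f t * g t) a.
Proof.
  intros Hf Hg.
  exact (filterlim_comp_2 f g Rmult Hf Hg (filterlim_mult (K := R_AbsRing) (f a) (g a))).
Qed.

Lemma right_cont_opp (f : R -> R) (a : R) :
  right_cont f a -> right_cont (fun t => - f t) a.
Proof.
  intros Hf. exact (filterlim_comp _ _ _ f Ropp _ _ _ Hf (filterlim_opp (V := R_NormedModule) (f a))).
Qed.

Lemma is_derive_Rplus (f g : R -> R) (t a b : R) :
  is_derive f t a -> is_derive g t b -> is_derive (fun s => f s + g s) t (a + b).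
Proof. intros Hf Hg. exact (is_derive_plus f g t a b Hf Hg). Qed.

Lemma is_derive_Rminus (f g : R -> R) (t a b : R) :
  is_derive f t a -> is_derive g t b -> is_derive (fun s => f s - g s) t (a - b).
Proof. intros Hf Hg. exact (is_derive_minus f g t a b Hf Hg). Qed.

Lemma is_derive_Rmult (f g : R -> R) (t a b : R) :
  is_derive f t a -> is_derive g t b ->
  is_derive (fun s => f s * g s) t (a * g t + f t * b).
Proof. intros Hf Hg. exact (is_derive_mult f g t a b Hf Hg Rmult_comm). Qed.

Lemma nondecreasing_of_deriv_nonneg (f df : R -> R) (a b : R) : a <= b ->
  (forall t, a < t <= b -> is_derive f t (df t)) ->
  (forall t, a < t <= b -> 0 <= df t) ->
  right_cont f a -> f a <= f b.
Proof.
  intros Hab Hd Hdf Hrc.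
  destruct (Rle_or_lt (f a) (f b)) as [Hle | Hlt]; [exact Hle | exfalso].
  assert (Hab' : a < b) by (destruct Hab as [? | ->]; lra).
  destruct (Hrc _ (open_gt (f b) (f a) Hlt)) as [d Hnear].
  set (s := a + Rmin (d / 2) (b - a)).
  assert (Hd2 : 0 < d / 2) by (generalize (cond_pos d); lra).
  assert (Hmin : 0 < Rmin (d / 2) (b - a) <= b - a).
  { split; [apply Rmin_glb_lt; lra | apply Rmin_r]. }
  assert (Hfs : f b < f s).
  { apply Hnear; [| unfold s; lra].
    change (Rabs (s - a) < d).
    unfold s; rewrite Rabs_right by lra.
    generalize (Rmin_l (d / 2) (b - a)); lra. }
  destruct (MVT_gen f s b df) as [c [Hc Hmvt]];
    rewrite Rmin_left, Rmax_right in * by (unfold s; lra).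
  - intros x Hx. apply Hd. unfold s in *; lra.
  - intros x Hx. apply continuity_pt_filterlim, (continuous_of_is_derive f x (df x)), Hd.
    unfold s in *; lra.
  - assert (0 <= df c * (b - s)) by (apply Rmult_le_pos; [apply Hdf | ]; unfold s in *; lra).
    lra.
Qed.

Lemma le_linear_of_deriv_le (f df : R -> R) (M : R) :
  (forall t, 0 < t -> is_derive f t (df t)) -> (forall t, 0 < t -> df t <= M) ->
  right_cont f 0 -> forall t, 0 <= t -> f t <= f 0 + M * t.
Proof.
  intros Hd HM Hrc t Ht.
  enough (M * 0 - f 0 <= M * t - f t) by lra.
  apply (nondecreasing_of_deriv_nonneg (fun s => M * s - f s) (fun s => M - df s)); [exact Ht | | |].
  - intros s Hs. refine (eq_ind_r (is_derive _ s) (is_derive_Rminus _ _ _ _ _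
      (is_derive_Rmult (fun _ => M) (fun s => s) s 0 1 (is_derive_const M s) (is_derive_id s))
      (Hd s (proj1 Hs))) _). simpl. ring.
  - intros s Hs. generalize (HM s (proj1 Hs)). lra.
  - apply right_cont_plus, right_cont_opp, Hrc.
    apply right_cont_mult; [apply right_cont_const |].
    apply right_cont_of_continuous, continuous_id.
Qed.

Lemma const_of_deriv_zero (f : R -> R) :
  (forall t, 0 < t -> is_derive f t 0) -> right_cont f 0 ->
  forall t, 0 <= t -> f t = f 0.
Proof.
  intros Hd Hrc t Ht.
  assert (Hup : f t <= f 0 + 0 * t)
    by exact (le_linear_of_deriv_le f (fun _ => 0) 0 Hd (fun _ _ => Rle_refl 0) Hrc t Ht).
  assert (Hlow : - f t <= - f 0 + 0 * t).
  { apply (le_linear_of_deriv_le (fun s => - f s) (fun _ => - 0)).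
    - intros s Hs. exact (is_derive_opp f s 0 (Hd s Hs)).
    - intros; lra.
    - now apply right_cont_opp.
    - exact Ht. }
  lra.
Qed.

(* Comparison with the last time before [T] at which [f] is nonnegative:
   after it [f] is negative, hence nondecreasing. *)
Lemma nonneg_of_deriv_nonneg_where_neg (f df : R -> R) :
  (forall t, 0 < t -> is_derive f t (df t)) -> right_cont f 0 -> 0 <= f 0 ->
  (forall t, 0 < t -> f t < 0 -> 0 <= df t) -> forall T, 0 <= T -> 0 <= f T.
Proof.
  intros Hd Hrc H0 Hneg T HT.
  destruct (Rle_or_lt 0 (f T)) as [HfT | HfT]; [exact HfT | exfalso].
  set (E := fun t => 0 <= t <= T /\ 0 <= f t).
  destruct (completeness E) as [m [Hub Hlub]].
  - exists T. intros x [Hx _]. lra.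
  - exists 0. split; lra.
  - assert (Hm0 : 0 <= m) by (apply Hub; split; lra).
    assert (HmT : m <= T) by (apply Hlub; intros x [Hx _]; lra).
    assert (Hcont : 0 < m -> continuous f m)
      by (intros; apply (continuous_of_is_derive f m (df m)), Hd; lra).
    assert (Hfm : 0 <= f m).
    { destruct (Req_dec m 0) as [-> | Hmn]; [exact H0 |].
      destruct (Rle_or_lt 0 (f m)) as [Hq | Hq]; [exact Hq | exfalso].
      destruct (Hcont ltac:(lra) _ (open_lt 0 (f m) Hq)) as [d Hnear].
      assert (Hd2 : 0 < d / 2) by (generalize (cond_pos d); lra).
      enough (m <= m - d / 2) by lra.
      apply Hlub. intros x [Hx Hfx].
      destruct (Rle_or_lt x (m - d / 2)) as [Q | Q]; [exact Q | exfalso].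
      assert (x <= m) by (apply Hub; split; auto).
      assert (f x < 0); [| lra].
      apply Hnear. change (Rabs (x - m) < d). rewrite Rabs_left1; lra. }
    assert (HmT' : m < T) by (destruct (Req_dec m T) as [-> | ]; lra).
    enough (f m <= f T) by lra.
    apply (nondecreasing_of_deriv_nonneg f df); [lra | | |].
    + intros s Hs. apply Hd. lra.
    + intros s Hs. apply Hneg; [lra |].
      destruct (Rle_or_lt 0 (f s)) as [Q | Q]; [| exact Q].
      assert (s <= m) by (apply Hub; split; [lra | exact Q]). lra.
    + destruct (Req_dec m 0) as [-> | Hmn]; [exact Hrc |].
      apply right_cont_of_continuous, Hcont. lra.
Qed.

Lemma linear_le_on_ellipse (eps G u v : R) : 0 < eps ->
  u ^ 2 + eps ^ 2 * v ^ 2 <= eps ^ 2 -> u + G * v <= sqrt (eps ^ 2 + G ^ 2).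
Proof.
  intros Heps Hell.
  (* Cauchy-Schwarz through the Lagrange identity *)
  assert (Hlag : eps ^ 2 * (u + G * v) ^ 2 + (u * G - eps ^ 2 * v) ^ 2
                 = (u ^ 2 + eps ^ 2 * v ^ 2) * (eps ^ 2 + G ^ 2)) by ring.
  assert (Hsq : (u + G * v) ^ 2 <= eps ^ 2 + G ^ 2).
  { apply (Rmult_le_reg_l (eps ^ 2)); [apply pow_lt, Heps |].
    assert (0 <= eps ^ 2 + G ^ 2) by (generalize (pow2_ge_0 eps) (pow2_ge_0 G); lra).
    generalize (pow2_ge_0 (u * G - eps ^ 2 * v)). nra. }
  assert (Hroot := sqrt_sqrt (eps ^ 2 + G ^ 2) ltac:(generalize (pow2_ge_0 eps) (pow2_ge_0 G); lra)).
  assert (Hpos := sqrt_pos (eps ^ 2 + G ^ 2)).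
  nra.
Qed.

Lemma drive_plus_decay_le (ex ey zr zi x g G eps : R) :
  0 < eps -> 0 <= g <= G -> ex ^ 2 + ey ^ 2 <= eps ^ 2 ->
  zr ^ 2 + zi ^ 2 <= x * (1 - x) ->
  ex * zi + ey * zr + g * x <= (G + sqrt (eps ^ 2 + G ^ 2)) / 2.
Proof.
  intros Heps Hg Hexy Hz.
  set (s := ex * zi + ey * zr).
  assert (Hx : 0 <= x <= 1).
  { assert (0 <= x * (1 - x)) by (generalize (pow2_ge_0 zr) (pow2_ge_0 zi); lra).
    split; destruct (Rle_or_lt 0 x), (Rle_or_lt x 1); nra. }
  assert (Hs : s ^ 2 <= eps ^ 2 * (x * (1 - x))).
  { assert (Hlag : (ex ^ 2 + ey ^ 2) * (zr ^ 2 + zi ^ 2) - s ^ 2 = (ex * zr - ey * zi) ^ 2)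
      by (unfold s; ring).
    generalize (pow2_ge_0 (ex * zr - ey * zi)) (pow2_ge_0 zr) (pow2_ge_0 zi).
    nra. }
  assert (Hell := linear_le_on_ellipse eps G (2 * s) (2 * x - 1) Heps ltac:(nra)).
  assert (g * x <= G * x) by nra.
  lra.
Qed.

(* The solution is not assumed Hermitian, so the coherence is taken to be the
   Hermitian part (rho_01 + conj rho_10) / 2 of the off-diagonal entry. *)
Definition pop0 (r : mat) : R := Re (r 0%nat 0%nat).
Definition pop1 (r : mat) : R := Re (r 1%nat 1%nat).
Definition coh_re (r : mat) : R := / 2 * (Re (r 0%nat 1%nat) + Re (r 1%nat 0%nat)).
Definition coh_im (r : mat) : R := / 2 * (Im (r 0%nat 1%nat) - Im (r 1%nat 0%nat)).
Definition state_det (r : mat) : R :=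
  pop0 r * pop1 r - (coh_re r * coh_re r + coh_im r * coh_im r).

Local Ltac expand_master :=
  unfold lindblad_rhs, madd, msub, mscale, mmul, comm, Ham, dissip,
    Ix, Iy, Iz, sminus, splus, sx, sy, sz, pop0, pop1, coh_re, coh_im;
  unfold Cplus, Cminus, Cmult, Copp, RtoC, Ci, Re, Im; simpl; field.

Section BlochEquations.
Variables (om ex ey dg : R -> R) (g0 t : R) (r : mat).

Lemma lindblad_rhs_pop0 : Re (lindblad_rhs om ex ey dg g0 t r 0%nat 0%nat) =
  - (ex t * coh_im r + ey t * coh_re r) - (g0 + dg t) * pop0 r.
Proof. expand_master. Qed.

Lemma lindblad_rhs_pop1 : Re (lindblad_rhs om ex ey dg g0 t r 1%nat 1%nat) =
  ex t * coh_im r + ey t * coh_re r + (g0 + dg t) * pop0 r.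
Proof. expand_master. Qed.

Lemma lindblad_rhs_coh_re :
  / 2 * (Re (lindblad_rhs om ex ey dg g0 t r 0%nat 1%nat)
         + Re (lindblad_rhs om ex ey dg g0 t r 1%nat 0%nat)) =
  (1 + om t) * coh_im r - ey t * (pop1 r - pop0 r) / 2 - (g0 + dg t) * coh_re r / 2.
Proof. expand_master. Qed.

Lemma lindblad_rhs_coh_im :
  / 2 * (Im (lindblad_rhs om ex ey dg g0 t r 0%nat 1%nat)
         - Im (lindblad_rhs om ex ey dg g0 t r 1%nat 0%nat)) =
  - (1 + om t) * coh_re r - ex t * (pop1 r - pop0 r) / 2 - (g0 + dg t) * coh_im r / 2.
Proof. expand_master. Qed.

End BlochEquations.

Section MasterEquation.
Variables (om ex ey dg : R -> R) (g0 : R) (rho : R -> mat).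
Hypothesis sol : solves_master om ex ey dg g0 rho.

Lemma deriv_pop0 t : 0 < t -> is_derive (fun s => pop0 (rho s)) t
  (- (ex t * coh_im (rho t) + ey t * coh_re (rho t)) - (g0 + dg t) * pop0 (rho t)).
Proof.
  intros Ht. destruct sol as [_ [_ Hder]].
  destruct (Hder t Ht 0%nat 0%nat) as [H _]; [lia | lia |].
  rewrite <- (lindblad_rhs_pop0 om). exact H.
Qed.

Lemma deriv_pop1 t : 0 < t -> is_derive (fun s => pop1 (rho s)) t
  (ex t * coh_im (rho t) + ey t * coh_re (rho t) + (g0 + dg t) * pop0 (rho t)).
Proof.
  intros Ht. destruct sol as [_ [_ Hder]].
  destruct (Hder t Ht 1%nat 1%nat) as [H _]; [lia | lia |].
  rewrite <- (lindblad_rhs_pop1 om). exact H.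
Qed.

Lemma deriv_coh_re t : 0 < t -> is_derive (fun s => coh_re (rho s)) t
  ((1 + om t) * coh_im (rho t) - ey t * (pop1 (rho t) - pop0 (rho t)) / 2
   - (g0 + dg t) * coh_re (rho t) / 2).
Proof.
  intros Ht. destruct sol as [_ [_ Hder]].
  destruct (Hder t Ht 0%nat 1%nat) as [H01 _]; [lia | lia |].
  destruct (Hder t Ht 1%nat 0%nat) as [H10 _]; [lia | lia |].
  pose proof (is_derive_scal _ _ (/ 2) _ (is_derive_Rplus _ _ _ _ _ H01 H10)) as H.
  rewrite <- (lindblad_rhs_coh_re om ex). exact H.
Qed.

Lemma deriv_coh_im t : 0 < t -> is_derive (fun s => coh_im (rho s)) t
  (- (1 + om t) * coh_re (rho t) - ex t * (pop1 (rho t) - pop0 (rho t)) / 2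
   - (g0 + dg t) * coh_im (rho t) / 2).
Proof.
  intros Ht. destruct sol as [_ [_ Hder]].
  destruct (Hder t Ht 0%nat 1%nat) as [_ H01]; [lia | lia |].
  destruct (Hder t Ht 1%nat 0%nat) as [_ H10]; [lia | lia |].
  pose proof (is_derive_scal _ _ (/ 2) _ (is_derive_Rminus _ _ _ _ _ H01 H10)) as H.
  rewrite <- (lindblad_rhs_coh_im om ex ey). exact H.
Qed.

Lemma right_cont_re i j : (i < 2)%nat -> (j < 2)%nat ->
  right_cont (fun s => Re (rho s i j)) 0.
Proof. intros Hi Hj. destruct sol as [_ [Hcont _]]. exact (proj1 (Hcont i j Hi Hj)). Qed.

Lemma right_cont_im i j : (i < 2)%nat -> (j < 2)%nat ->
  right_cont (fun s => Im (rho s i j)) 0.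
Proof. intros Hi Hj. destruct sol as [_ [Hcont _]]. exact (proj2 (Hcont i j Hi Hj)). Qed.

Lemma right_cont_pop0 : right_cont (fun s => pop0 (rho s)) 0.
Proof. exact (right_cont_re 0 0 ltac:(lia) ltac:(lia)). Qed.

Lemma right_cont_pop1 : right_cont (fun s => pop1 (rho s)) 0.
Proof. exact (right_cont_re 1 1 ltac:(lia) ltac:(lia)). Qed.

Lemma right_cont_state_det : right_cont (fun s => state_det (rho s)) 0.
Proof.
  assert (Hre : right_cont (fun s => coh_re (rho s)) 0).
  { apply right_cont_mult; [apply right_cont_const |].
    apply right_cont_plus; [apply (right_cont_re 0 1) | apply (right_cont_re 1 0)]; lia. }
  assert (Him : right_cont (fun s => coh_im (rho s)) 0).
  { apply right_cont_mult; [apply right_cont_const |].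
    apply right_cont_plus; [apply (right_cont_im 0 1) | apply right_cont_opp, (right_cont_im 1 0)];
      lia. }
  apply right_cont_plus; [apply right_cont_mult; [apply right_cont_pop0 | apply right_cont_pop1] |].
  apply right_cont_opp, right_cont_plus; apply right_cont_mult; assumption.
Qed.

Lemma trace_preserved t : 0 <= t -> pop0 (rho t) + pop1 (rho t) = 1.
Proof.
  intros Ht.
  assert (H0 : pop0 (rho 0) + pop1 (rho 0) = 1).
  { destruct sol as [Hinit _]. unfold pop0, pop1. rewrite Hinit. simpl. ring. }
  rewrite <- H0.
  apply (const_of_deriv_zero (fun s => pop0 (rho s) + pop1 (rho s))); [| | exact Ht].
  - intros s Hs.
    refine (eq_ind_r (is_derive _ s)
              (is_derive_Rplus _ _ _ _ _ (deriv_pop0 s Hs) (deriv_pop1 s Hs)) _).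
    simpl; ring.
  - apply right_cont_plus; [apply right_cont_pop0 | apply right_cont_pop1].
Qed.

Lemma deriv_state_det t : 0 < t -> is_derive (fun s => state_det (rho s)) t
  ((g0 + dg t) * (pop0 (rho t) * pop0 (rho t) - state_det (rho t))).
Proof.
  intros Ht.
  refine (eq_ind_r (is_derive _ t)
    (is_derive_Rminus _ _ _ _ _ (is_derive_Rmult _ _ _ _ _ (deriv_pop0 t Ht) (deriv_pop1 t Ht))
       (is_derive_Rplus _ _ _ _ _
          (is_derive_Rmult _ _ _ _ _ (deriv_coh_re t Ht) (deriv_coh_re t Ht))
          (is_derive_Rmult _ _ _ _ _ (deriv_coh_im t Ht) (deriv_coh_im t Ht)))) _).
  unfold state_det. simpl; field.
Qed.

Lemma state_det_nonneg : (forall t, 0 < t -> 0 <= g0 + dg t) ->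
  forall t, 0 <= t -> 0 <= state_det (rho t).
Proof.
  intros Hrate.
  apply (nonneg_of_deriv_nonneg_where_neg _ _ deriv_state_det right_cont_state_det).
  - destruct sol as [Hinit _].
    unfold state_det, pop0, pop1, coh_re, coh_im. rewrite Hinit. simpl. lra.
  - intros s Hs Hneg. generalize (Hrate s Hs). nra.
Qed.

Lemma pop1_le_linear (eps G : R) : 0 < eps ->
  (forall t, 0 < t -> 0 <= g0 + dg t <= G) ->
  (forall t, 0 < t -> ex t ^ 2 + ey t ^ 2 <= eps ^ 2) ->
  forall t, 0 <= t -> pop1 (rho t) <= (G + sqrt (eps ^ 2 + G ^ 2)) / 2 * t.
Proof.
  intros Heps Hrate Hdrive t Ht.
  assert (H0 : pop1 (rho 0) = 0).
  { destruct sol as [Hinit _]. unfold pop1. rewrite Hinit. reflexivity. }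
  rewrite <- (Rplus_0_l (_ * t)), <- H0.
  apply (le_linear_of_deriv_le _ _ _ deriv_pop1); [| apply right_cont_pop1 | exact Ht].
  intros s Hs.
  apply drive_plus_decay_le; [exact Heps | apply Hrate, Hs | apply Hdrive, Hs |].
  generalize (state_det_nonneg (fun s Hs => proj1 (Hrate s Hs)) s (Rlt_le _ _ Hs))
             (trace_preserved s (Rlt_le _ _ Hs)).
  unfold state_det. nra.
Qed.

End MasterEquation.

(* [Ta] is built from the weaker rate bound with 4 eps^2 in place of eps^2. *)
Lemma rate_mul_le_of_le_Ta (p0 eps gamma0 gamma t : R) :
  0 < eps -> 0 <= gamma0 + gamma -> 0 <= t <= Ta p0 eps gamma0 gamma ->
  (gamma0 + gamma + sqrt (eps ^ 2 + (gamma0 + gamma) ^ 2)) / 2 * t <= p0.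
Proof.
  unfold Ta. set (G := gamma0 + gamma). set (S := sqrt (4 * eps ^ 2 + G ^ 2)).
  intros Heps HG [Ht0 HtT].
  assert (HS : sqrt (eps ^ 2 + G ^ 2) <= S) by (apply sqrt_le_1_alt; nra).
  assert (HSG : 0 < S + G) by (assert (0 < S) by (apply sqrt_lt_R0; nra); lra).
  apply (Rmult_le_compat_l ((G + S) / 2)) in HtT; [| lra].
  replace ((G + S) / 2 * (2 * p0 / (S + G))) with p0 in HtT by (field; lra).
  assert ((G + sqrt (eps ^ 2 + G ^ 2)) / 2 * t <= (G + S) / 2 * t)
    by (apply Rmult_le_compat_r; lra).
  lra.
Qed.

Theorem theorem2 (p0 eps om gamma0 gamma : R)
  (omt ex ey dgam : R -> R) (rho : R -> mat) :
  0 < p0 < 1 -> 0 < eps -> 0 <= om -> 0 <= gamma -> gamma <= gamma0 ->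
  (forall t, 0 <= t -> Rabs (omt t) <= om) ->
  (forall t, 0 <= t -> sqrt (ex t ^ 2 + ey t ^ 2) <= eps) ->
  (forall t, 0 <= t -> Rabs (dgam t) <= gamma) ->
  solves_master omt ex ey dgam gamma0 rho ->
  forall t, 0 <= t <= Ta p0 eps gamma0 gamma ->
    1 - p0 <= Re (rho t 0%nat 0%nat) /\ Re (rho t 1%nat 1%nat) <= p0.
Proof.
  (* The detuning [omt] only rotates the coherence. *)
  intros _ Heps _ Hgam Hgg _ Hexy Hdg Hsol t Ht.
  assert (Ht0 : 0 <= t) by apply Ht.
  set (G := gamma0 + gamma).
  assert (Hrate : forall s, 0 < s -> 0 <= gamma0 + dgam s <= G).
  { intros s Hs. generalize (proj1 (Rabs_le_between _ _) (Hdg s (Rlt_le _ _ Hs))). unfold G. lra. }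
  assert (Hdrive : forall s, 0 < s -> ex s ^ 2 + ey s ^ 2 <= eps ^ 2).
  { intros s Hs. assert (Hq := Hexy s (Rlt_le _ _ Hs)).
    assert (Hsq := sqrt_sqrt (ex s ^ 2 + ey s ^ 2)
                     ltac:(generalize (pow2_ge_0 (ex s)) (pow2_ge_0 (ey s)); lra)).
    generalize (sqrt_pos (ex s ^ 2 + ey s ^ 2)). nra. }
  assert (Hpop1 := pop1_le_linear _ _ _ _ _ _ Hsol eps G Heps Hrate Hdrive t Ht0).
  assert (Htrace := trace_preserved _ _ _ _ _ _ Hsol t Ht0).
  assert (HTa := rate_mul_le_of_le_Ta p0 eps gamma0 gamma t Heps ltac:(lra) Ht).
  unfold pop0, pop1 in *. fold G in HTa. split; lra.
Qed.
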